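(* Let $K\ge1$, $r\in[0,1]^K$, $g(\theta)=\pi_\theta^\top r$ with $\pi_\theta=\mathrm{softmax}(\theta)$, $\theta\in\mathbb{R}^K$. Let $\theta\in\mathbb{R}^K$ with $\nabla g(\theta)\neq0$, let $\eta\in(0,1/3)$, and let $\theta'=\theta+\eta\,\nabla g(\theta)/\|\nabla g(\theta)\|_2$. Then for every $\zeta\in[0,1]$, with $\theta_\zeta:=\theta+\zeta(\theta'-\theta)$, $$\|\nabla g(\theta_\zeta)\|_2\le\frac{1}{1-3\eta}\,\|\nabla g(\theta)\|_2.$$
   Context: $\mathrm{softmax}(\theta)(a)=e^{\theta(a)}/\sum_{a'}e^{\theta(a')}$. *)

From HB Require Import structures.
From mathcomp Require Import all_boot all_order all_algebra.
From mathcomp Require Import all_classical all_reals all_analysis.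
Set Implicit Arguments. Unset Strict Implicit. Unset Printing Implicit Defensive.
Import Order.TTheory GRing.Theory Num.Theory.
Import numFieldNormedType.Exports.
Local Open Scope ring_scope.

Section Defs.
Variables (R : realType) (K : nat).

Definition softmax (th : 'rV[R]_K) : 'rV[R]_K :=
  \row_a (expR (th 0 a) / \sum_b expR (th 0 b)).

Definition gval (r : 'rV[R]_K) (th : 'rV[R]_K) : R :=
  \sum_a softmax th 0 a * r 0 a.

Definition grad (f : 'rV[R]_K -> R) (th : 'rV[R]_K) : 'rV[R]_K :=
  \row_a ('D_(delta_mx 0 a) f th).

Definition norm2 (v : 'rV[R]_K) : R := Num.sqrt (\sum_a v 0 a ^+ 2).

End Defs.

From HB Require Import structures.
From mathcomp Require Import all_boot all_order all_algebra.
From mathcomp Require Import all_classical all_reals all_analysis.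
From mathcomp Require Import ring lra.
Import Order.TTheory GRing.Theory Num.Theory.
Import numFieldNormedType.Exports.
Set Implicit Arguments. Unset Strict Implicit. Unset Printing Implicit Defensive.
Local Open Scope ring_scope.

(* Write pi = softmax theta and g = <pi, r>.  The gradient has the closed form
   grad g (theta)_a = pi_a (r_a - g) (grad_gval).  Along the segment
   theta + s v with v = eta grad g / |grad g|, so |v| = eta, the function
   G(s) = |grad g (theta + s v)|^2 has derivative
     2 sum_a h_a^2 (v_a - <pi, v>) - 2 <v, h> <h, pi>      (h = grad g),
   and a purely algebraic estimate on probability vectors (Cauchy-Schwarz and
   |v_a| <= eta) bounds it by 6 eta G(s).  A linear Gronwall argument then
   gives G(zeta) <= G(0) exp(6 eta zeta), and exp(3 eta) <= 1 / (1 - 3 eta)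
   concludes after taking square roots. *)

Section FiniteSums.
Variables (R : realDomainType) (I : finType).

Lemma cauchy_schwarz (a b : I -> R) :
  (\sum_i a i * b i) ^+ 2 <= (\sum_i a i ^+ 2) * (\sum_i b i ^+ 2).
Proof.
have lhsE : (\sum_i a i * b i) ^+ 2 = \sum_i \sum_j (a i * b j) * (a j * b i).
  rewrite expr2 mulr_suml; apply: eq_bigr => i _; rewrite mulr_sumr.
  by apply: eq_bigr => j _; ring.
have rhsE : (\sum_i a i ^+ 2) * (\sum_i b i ^+ 2) = \sum_i \sum_j (a i * b j) ^+ 2.
  rewrite mulr_suml; apply: eq_bigr => i _; rewrite mulr_sumr.
  by apply: eq_bigr => j _; ring.
(* Symmetrize: 2 xy <= x^2 + y^2 with x = a i b j and y = a j b i. *)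
have sym : \sum_i \sum_j (a i * b j) ^+ 2 = \sum_i \sum_j (a j * b i) ^+ 2.
  by rewrite exchange_big.
have amgm : \sum_i \sum_j 2 * ((a i * b j) * (a j * b i)) <=
    \sum_i \sum_j ((a i * b j) ^+ 2 + (a j * b i) ^+ 2).
  apply: ler_sum => i _; apply: ler_sum => j _.
  by have := sqr_ge0 (a i * b j - a j * b i); nra.
have twiceE : \sum_i \sum_j 2 * ((a i * b j) * (a j * b i)) =
    2 * \sum_i \sum_j (a i * b j) * (a j * b i).
  by rewrite mulr_sumr; apply: eq_bigr => i _; rewrite mulr_sumr.
have splitE : \sum_i \sum_j ((a i * b j) ^+ 2 + (a j * b i) ^+ 2) =
    \sum_i \sum_j (a i * b j) ^+ 2 + \sum_i \sum_j (a j * b i) ^+ 2.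
  by rewrite -big_split; apply: eq_bigr => i _; rewrite big_split.
by move: amgm; rewrite twiceE splitE -sym lhsE rhsE; lra.
Qed.

Lemma ler_sum_term (F : I -> R) (a : I) : (forall b, 0 <= F b) -> F a <= \sum_b F b.
Proof. by move=> F0; rewrite (bigD1 a) //= lerDl sumr_ge0. Qed.

Lemma coord_bound (w : I -> R) (eta : R) : 0 <= eta ->
  \sum_b w b ^+ 2 <= eta ^+ 2 -> forall a, - eta <= w a <= eta.
Proof.
move=> eta0 weta a; have : w a ^+ 2 <= eta ^+ 2.
  by apply: le_trans weta; apply: ler_sum_term => b; exact: sqr_ge0.
by move=> wa; apply/andP; split; nra.
Qed.

Section Probability.
Variable p : I -> R.
Hypotheses (p_ge0 : forall b, 0 <= p b) (p_sum1 : \sum_b p b = 1).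

Lemma mean_bound (w : I -> R) (eta : R) : (forall a, - eta <= w a <= eta) ->
  - eta <= \sum_b p b * w b <= eta.
Proof.
move=> wb; apply/andP; split.
  rewrite -[- eta]mul1r -p_sum1 mulr_suml; apply: ler_sum => b _.
  by apply: ler_wpM2l => //; case/andP: (wb b).
rewrite -[eta]mul1r -p_sum1 mulr_suml; apply: ler_sum => b _.
by apply: ler_wpM2l => //; case/andP: (wb b).
Qed.

Lemma sum_sqr_prob_le1 : \sum_b p b ^+ 2 <= 1.
Proof.
rewrite -p_sum1; apply: ler_sum => a _.
have pa1 : p a <= 1 by rewrite -p_sum1; exact: ler_sum_term.
by have := p_ge0 a; nra.
Qed.

(* The quadratic-form estimate behind the growth of the gradient norm: if w
   has Euclidean length at most eta and wbar is its p-mean, then for every h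
   2 sum h^2 (w - wbar) - 2 <w,h> <h,p> <= 6 eta |h|^2. *)
Lemma quadratic_growth_bound (w h : I -> R) (eta : R) : 0 <= eta ->
  \sum_b w b ^+ 2 <= eta ^+ 2 ->
  2 * \sum_a h a ^+ 2 * (w a - \sum_b p b * w b)
    - 2 * ((\sum_a w a * h a) * (\sum_a h a * p a))
  <= 6 * eta * \sum_a h a ^+ 2.
Proof.
move=> eta0 weta; set G := \sum_a h a ^+ 2; set D := \sum_a w a * h a.
set Y := \sum_a h a * p a; set wbar := \sum_b p b * w b.
have G0 : 0 <= G by apply: sumr_ge0 => a _; exact: sqr_ge0.
have wb := coord_bound eta0 weta.
(* |w a - wbar| <= 2 eta controls the first term. *)
have first : \sum_a h a ^+ 2 * (w a - wbar) <= 2 * eta * G.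
  rewrite /G mulr_sumr; apply: ler_sum => a _.
  rewrite [leRHS]mulrC; apply: ler_wpM2l; first exact: sqr_ge0.
  have /andP[? ?] : - eta <= wbar <= eta := mean_bound wb.
  by have /andP[? ?] := wb a; lra.
have D2 : D ^+ 2 <= eta ^+ 2 * G.
  by apply: le_trans (cauchy_schwarz w h) _; apply: ler_wpM2r.
have Y2 : Y ^+ 2 <= G.
  apply: le_trans (cauchy_schwarz h p) _; rewrite -[leRHS]mulr1.
  exact: ler_wpM2l sum_sqr_prob_le1.
have second : - (D * Y) <= eta * G.
  have DY2 : (D * Y) ^+ 2 <= (eta * G) ^+ 2.
    rewrite !exprMn; apply: le_trans (ler_pM (sqr_ge0 _) (sqr_ge0 _) D2 Y2) _.
    by rewrite -mulrA -expr2.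
  have etaG0 : 0 <= eta * G by exact: mulr_ge0.
  have : `|D * Y| <= eta * G by rewrite -ler_sqr ?nnegrE // real_normK ?num_real.
  by rewrite ler_norml => /andP[? ?]; lra.
by lra.
Qed.

End Probability.
End FiniteSums.

Section OneVariable.
Variable R : realType.

Lemma is_derive_expR_affine (a b t : R) :
  is_derive t 1 (fun s : R => expR (a + s * b)) (expR (a + t * b) * b).
Proof.
have affine : is_derive t 1 (fun s : R => a + s * b) b.
  have -> : (fun s : R => a + s * b) = cst a + (fun s => b *: s).
    by apply/funext => s /=; rewrite [s * b]mulrC.
  by apply: is_derive_eq; rewrite add0r /GRing.scale /= mulr1.
exact: (is_derive1_comp (f := expR) _ affine).
Qed.

(* Linear Gronwall inequality: G' <= c G everywhere forces
   G z <= G 0 exp (c z) for z >= 0, since G(s) exp(-c s) is nonincreasing. *)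
Lemma gronwall_linear (G dG : R -> R) (c z : R) :
  (forall t : R, is_derive t 1 G (dG t)) -> (forall t, dG t <= c * G t) ->
  0 <= z -> G z <= G 0 * expR (c * z).
Proof.
move=> G' dG_le z0; set F := G * (fun s => expR (0 + s * - c)).
have F' (t : R) : is_derive t 1 F
    (G t *: (expR (0 + t * - c) * - c) + expR (0 + t * - c) *: dG t).
  exact: is_deriveM (G' t) (is_derive_expR_affine 0 (- c) t).
have [t _ mvt] := MVT_segment z0 (fun t _ => F' t)
  (derivable_within_continuous (fun t _ => @ex_derive _ _ _ _ _ _ _ (F' t))).
have F_decr : F z <= F 0.
  suff : (G t *: (expR (0 + t * - c) * - c) + expR (0 + t * - c) *: dG t) * (z - 0) <= 0.
    by rewrite -mvt; lra.
  apply: mulr_le0_ge0; last by rewrite subr0.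
  rewrite /GRing.scale /=; move: (expR_gt0 (0 + t * - c)) (dG_le t).
  by move: (expR _) => e e0; nra.
have FE s : F s = G s * expR (s * - c).
  by rewrite /F (_ : (G * _) s = G s * expR (0 + s * - c)) // add0r.
move: F_decr; rewrite !FE mul0r expR0 mulr1 => F_decr.
have -> : G z = G z * expR (z * - c) * expR (c * z).
  by rewrite -mulrA -expRD (_ : z * - c + c * z = 0) ?expR0 ?mulr1 //; ring.
by apply: ler_wpM2r => //; exact: expR_ge0.
Qed.

(* exp x <= 1 / (1 - x) for x < 1, from 1 - x <= exp (- x). *)
Lemma expR_le_inv1B (x : R) : x < 1 -> expR x <= (1 - x)^-1.
Proof.
move=> x1; have pos : 0 < 1 - x by lra.
rewrite -[expR x]invrK -expRN lef_pV2 ?posrE ?expR_gt0 //.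
by have := expR_ge1Dx (- x); lra.
Qed.

End OneVariable.

Section Softmax.
Variables (R : realType) (K : nat).
Implicit Types (th v r : 'rV[R]_K) (a : 'I_K).

Lemma softmax_ge0 th a : 0 <= softmax th 0 a.
Proof. by rewrite mxE divr_ge0 ?expR_ge0 // sumr_ge0 // => b _; exact: expR_ge0. Qed.

(* The softmax weights form a probability vector (K >= 1 is witnessed by a0). *)
Lemma softmax_sum1 th (a0 : 'I_K) : \sum_a softmax th 0 a = 1.
Proof.
under eq_bigr => a _ do rewrite mxE.
rewrite -mulr_suml divff // gt_eqF // (bigD1 a0) //= ltr_pwDl ?expR_gt0 //.
by rewrite sumr_ge0 // => b _; exact: expR_ge0.
Qed.

Section Line.
Variables th v : 'rV[R]_K.

Let E a (s : R) := expR (th 0 a + s * v 0 a).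
Let S (s : R) := \sum_b E b s.

Lemma softmax_line a s : softmax (th + s *: v) 0 a = E a s / S s.
Proof.
rewrite mxE /S /E !mxE [s * _]mulrC; congr (expR _ / _).
by apply: eq_bigr => b _; rewrite !mxE [s * _]mulrC.
Qed.

(* Along a line the softmax weights move by pi_a (v_a - <pi, v>); the mean
   <pi, v> is gval v. *)
Lemma is_derive_softmax_line a (t : R) :
  is_derive t 1 (fun s => softmax (th + s *: v) 0 a)
    (softmax (th + t *: v) 0 a * (v 0 a - gval v (th + t *: v))).
Proof.
have S_gt0 : 0 < S t.
  rewrite /S (bigD1 a) //= ltr_pwDl ?expR_gt0 // sumr_ge0 // => b _.
  exact: expR_ge0.
have dS : is_derive t 1 S (\sum_b E b t * v 0 b).
  have -> : S = \sum_b E b by rewrite /S fct_sumE.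
  by apply: is_derive_sum => b; exact: is_derive_expR_affine.
have -> : (fun s => softmax (th + s *: v) 0 a) = E a * (fun s => (S s)^-1).
  by apply/funext => s; rewrite softmax_line.
have dE : is_derive t 1 (E a) (E a t * v 0 a) by exact: is_derive_expR_affine.
eapply is_derive_eq; first exact: is_deriveM dE (is_deriveV (lt0r_neq0 S_gt0) dS).
have meanE : gval v (th + t *: v) = (S t)^-1 * \sum_b E b t * v 0 b.
  by rewrite /gval mulr_sumr; apply: eq_bigr => b _; rewrite softmax_line; ring.
rewrite meanE softmax_line /GRing.scale /=; field.
exact: lt0r_neq0.
Qed.

Lemma is_derive_gval_line r (t : R) :
  is_derive t 1 (fun s => gval r (th + s *: v))
    (\sum_a v 0 a * (softmax (th + t *: v) 0 a * (r 0 a - gval r (th + t *: v)))).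
Proof.
have -> : (fun s => gval r (th + s *: v)) =
    \sum_a ((fun s => softmax (th + s *: v) 0 a) * cst (r 0 a)).
  by apply/funext => s; rewrite fct_sumE.
eapply is_derive_eq; first exact: (is_derive_sum (fun a => is_deriveM
  (is_derive_softmax_line a t) (is_derive_cst (r 0 a) _ _))).
set p := th + t *: v.
(* Both sides equal the centred second moment <pi, v r> - <pi, v> <pi, r>. *)
have centred (x y : 'rV[R]_K) :
    \sum_a softmax p 0 a * x 0 a * (y 0 a - gval y p) =
    \sum_a softmax p 0 a * x 0 a * y 0 a - gval x p * gval y p.
  have -> : gval x p * gval y p = \sum_a softmax p 0 a * x 0 a * gval y p.
    by rewrite [gval x p]/gval mulr_suml.
  by rewrite -sumrB; apply: eq_bigr => a _; ring.
transitivity (\sum_a softmax p 0 a * r 0 a * (v 0 a - gval v p)).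
  by apply: eq_bigr => a _; rewrite /GRing.scale /= mulr0 add0r; ring.
transitivity (\sum_a softmax p 0 a * v 0 a * (r 0 a - gval r p)); last first.
  by apply: eq_bigr => a _; ring.
rewrite !centred [gval r p * _]mulrC; congr (_ - _).
by apply: eq_bigr => a _; ring.
Qed.

End Line.

Lemma derive_along_line (f : 'rV[R]_K -> R) x v :
  'D_v f x = 'D_1 (fun t : R => f (x + t *: v)) 0.
Proof.
rewrite /derive; suff -> :
    (fun h : R => h^-1 *: (f (x + (h *: 1 + 0) *: v) - f (x + 0 *: v))) =
    (fun h : R => h^-1 *: (f (h *: v + x) - f x)) by [].
apply/funext => h; have -> : h *: (1 : R) + 0 = h by rewrite addr0 /GRing.scale /= mulr1.
by rewrite scale0r addr0 [x + _]addrC.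
Qed.

Lemma grad_gval r th a : grad (gval r) th 0 a = softmax th 0 a * (r 0 a - gval r th).
Proof.
rewrite /grad mxE derive_along_line.
have [_ ->] := is_derive_gval_line th (delta_mx 0 a) r 0.
rewrite scale0r addr0 (bigD1 a) //= big1 ?addr0 => [|b /negbTE ba].
  by rewrite mxE !eqxx mul1r.
by rewrite mxE ba andbF mul0r.
Qed.

End Softmax.

Section GradientAlongLine.
Variables (R : realType) (K : nat) (r th v : 'rV[R]_K).

Lemma is_derive_grad_sqr_line (t : R) :
  let p := th + t *: v in let h a := grad (gval r) p 0 a in
  is_derive t 1 (fun s => \sum_a grad (gval r) (th + s *: v) 0 a ^+ 2)
    (2 * \sum_a h a ^+ 2 * (v 0 a - gval v p)
      - 2 * ((\sum_a v 0 a * h a) * (\sum_a h a * softmax p 0 a))).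
Proof.
move=> p h.
set F := fun a => (fun s => softmax (th + s *: v) 0 a) *
  (cst (r 0 a) - (fun s => gval r (th + s *: v))).
have -> : (fun s => \sum_a grad (gval r) (th + s *: v) 0 a ^+ 2) = \sum_a F a ^+ 2.
  by apply/funext => s; rewrite fct_sumE; apply: eq_bigr => a _; rewrite grad_gval.
eapply is_derive_eq.
  apply: is_derive_sum => a; apply: is_deriveX; apply: is_deriveM.
    exact: is_derive_softmax_line.
  exact: is_deriveB (is_derive_cst _ _ _) (is_derive_gval_line _ _ _ _).
rewrite -/p; set Dg := \sum_a v 0 a * _.
have -> : Dg = \sum_a v 0 a * h a by apply: eq_bigr => a _; rewrite /h grad_gval.
set D := \sum_a v 0 a * h a.
rewrite !mulr_sumr -sumrB; apply: eq_bigr => a _.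
have FE : F a t = softmax p 0 a * (r 0 a - gval r p) by [].
have CE : (cst (r 0 a) - (fun s => gval r (th + s *: v))) t = r 0 a - gval r p by [].
rewrite FE CE /h grad_gval /GRing.scale /= -/p; ring.
Qed.

Lemma grad_sqr_growth (a0 : 'I_K) (eta z : R) : 0 <= eta ->
  \sum_b v 0 b ^+ 2 <= eta ^+ 2 -> 0 <= z ->
  \sum_a grad (gval r) (th + z *: v) 0 a ^+ 2
    <= (\sum_a grad (gval r) th 0 a ^+ 2) * expR (6 * eta * z).
Proof.
move=> eta0 veta z0.
have := gronwall_linear (c := 6 * eta) (fun t => is_derive_grad_sqr_line t) _ z0.
rewrite scale0r addr0; apply=> t.
exact: (quadratic_growth_bound (softmax_ge0 (th + t *: v)) (softmax_sum1 _ a0) _ eta0 veta).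
Qed.

End GradientAlongLine.

Section Normalization.
Variables (R : realType) (K : nat).

Lemma sum_sqr_gt0 (u : 'rV[R]_K) : u != 0 -> 0 < \sum_b u 0 b ^+ 2.
Proof.
move=> u0; rewrite lt_def sumr_ge0 ?andbT => [|b _]; last exact: sqr_ge0.
apply: contra u0 => /eqP sum0; apply/eqP/rowP => b; rewrite mxE.
have sq0 : u 0 b ^+ 2 = 0 := psumr_eq0P (fun b _ => sqr_ge0 (u 0 b)) sum0 isT.
by move/eqP: sq0; rewrite sqrf_eq0 => /eqP.
Qed.

Lemma sum_sqr_normalize (u : 'rV[R]_K) (eta : R) : u != 0 ->
  \sum_b ((eta / norm2 u) *: u) 0 b ^+ 2 = eta ^+ 2.
Proof.
move=> u0; have S0 := sum_sqr_gt0 u0.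
have normE : norm2 u ^+ 2 = \sum_b u 0 b ^+ 2 by rewrite sqr_sqrtr ?ltW.
under eq_bigr => b _ do rewrite mxE exprMn.
rewrite -mulr_sumr -normE exprMn exprVn -mulrA mulVf ?mulr1 //.
by rewrite normE lt0r_neq0.
Qed.

End Normalization.

Theorem lemma3 (R : realType) (K : nat) (hK : (1 <= K)%N)
  (r : 'rV[R]_K) (hr : forall a, 0 <= r 0 a <= 1)
  (th : 'rV[R]_K) (hg : grad (gval r) th != 0)
  (eta : R) (heta : 0 < eta < 1 / 3)
  (zeta : R) (hzeta : 0 <= zeta <= 1) :
  let th' := th + (eta / norm2 (grad (gval r) th)) *: grad (gval r) th in
  norm2 (grad (gval r) (th + zeta *: (th' - th)))
    <= (1 - 3 * eta)^-1 * norm2 (grad (gval r) th).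
Proof.
cbv zeta; case/andP: heta => eta0 eta13; case/andP: hzeta => zeta0 zeta1.
set u := grad (gval r) th; set v := (eta / norm2 u) *: u.
have -> : th + zeta *: (th + v - th) = th + zeta *: v by rewrite addrAC subrr add0r.
have v_len : \sum_b v 0 b ^+ 2 <= eta ^+ 2 by rewrite sum_sqr_normalize.
have growth := grad_sqr_growth r th (Ordinal hK) (ltW eta0) v_len zeta0.
have exp_le : expR (6 * eta * zeta) <= ((1 - 3 * eta)^-1) ^+ 2.
  have e3 : expR (3 * eta) <= (1 - 3 * eta)^-1 by apply: expR_le_inv1B; lra.
  apply: (@le_trans _ _ (expR (3 * eta) ^+ 2)).
    by rewrite expr2 -expRD ler_expR; nra.
  by rewrite !expr2 ler_pM ?expR_ge0.
have inv_ge0 : 0 <= (1 - 3 * eta)^-1 by rewrite invr_ge0; lra.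
rewrite /norm2 -[X in _ <= X * _](ger0_norm inv_ge0) -sqrtr_sqr -sqrtrM ?sqr_ge0 //.
rewrite ler_sqrt ?mulr_ge0 ?sqr_ge0 ?sumr_ge0 // => [|b _]; last exact: sqr_ge0.
apply: le_trans growth _; rewrite mulrC ler_wpM2r //.
by apply: sumr_ge0 => b _; exact: sqr_ge0.
Qed.
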